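(* Let $G$ be a $B_2$-EPG graph given with a representation, let $a$ be a row, and let $X$ be a nonempty clique of $G$ consisting only of U-vertices, all with index $\{a\}$. Then there is a set $S_t$ of at most three typed intervals such that: (1) $S_t$ contains exactly one horizontal typed interval (on row $a$) and at most two vertical typed intervals; (2) every vertex of $X$ contains every typed interval of $S_t$; (3) a Z-vertex $u$ is adjacent to every vertex of $X$ if and only if $u$ intersects at least one of the typed intervals of $S_t$.
   Context: A graph $G$ is a $B_k$-EPG graph if each vertex $u$ can be assigned a path $P_u$ in the planar orthogonal grid with at most $k$ bends such that $uv\in E(G)$ iff $P_u$ and $P_v$ share at least one grid edge (a representation); for $B_2$-EPG graphs one assumes w.l.o.g. every path has exactly two bends. A vertex $u$ intersects a row (column) if $P_u$ contains a grid edge of it; the index of $u$ is the set of rows it intersects. A Z-vertex intersects exactly two rows and one column; a U-vertex intersects exactly one row and two columns. If $a$ is in the index of $u$, $P_u^a$ is the segment of row $a$ between the two points of row $a$ where $P_u$ stops or bends. Types: $\emptyset$, $\mathsf d$, $\mathsf u$. A typed interval on row $a$ is $[x\alpha, y\beta]$ with $\alpha\le\beta$ points of row $a$ and $x,y$ types. For typed intervals $t=[x\alpha,y\beta]$, $t'=[x'\alpha',y'\beta']$ on row $a$ and an endpoint $z\gamma\in\{x'\alpha',y'\beta'\}$ of $t'$, $t$ is coherent with $z\gamma$ if (i) $\gamma\in(\alpha,\beta)$ (open interval), or (ii) $z=\emptyset$ and $[\alpha,\beta]$ contains the grid edge of $[\alpha',\beta']$ incident to $\gamma$, or (iii) $z\neq\emptyset$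 and $z\gamma\in\{x\alpha,y\beta\}$. $t$ contains $t'$ if $[\alpha',\beta']\subseteq[\alpha,\beta]$ and $t$ is coherent with both endpoints of $t'$. $t$ intersects $t'$ if $[\alpha,\beta]\cap[\alpha',\beta']$ contains a grid edge, or $t$ is coherent with an endpoint of $t'$, or $t'$ is coherent with an endpoint of $t$. The t-projection of $u$ on $a$ is $[x\alpha,y\beta]$ where $\alpha,\beta$ are the endpoints of $P_u^a$ and the type of an endpoint $\gamma$ is $\emptyset$ if $P_u$ ends at $\gamma$, $\mathsf d$ if $P_u$ bends downwards at $\gamma$, $\mathsf u$ if upwards. A vertex $u$ contains (intersects) a typed interval $t$ on row $a$ if $a$ is in the index of $u$ and its t-projection on $a$ contains (intersects) $t$. Typed intervals on rows are called horizontal typed intervals. Vertical typed intervals (on a column), the t-projection of a vertex on a column it intersects, and containment/intersection of vertical typed intervals by vertices are defined identically after rotating the grid by $90^\circ$ (columns becoming rows). *)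

From HB Require Import structures.
From mathcomp Require Import all_boot all_order all_algebra.
Set Implicit Arguments. Unset Strict Implicit. Unset Printing Implicit Defensive.
Import Order.TTheory GRing.Theory Num.Theory.
Local Open Scope ring_scope.

(* A grid point (x, y): x = column, y = row (y grows upwards). *)
Definition point := (int * int)%type.

Inductive orient := Hor | Ver.
Definition is_hor (o : orient) : bool := if o is Hor then true else false.
Definition is_ver (o : orient) : bool := if o is Ver then true else false.

Definition line (o : orient) (p : point) : int :=
  match o with Hor => p.2 | Ver => p.1 end.
Definition pos (o : orient) (p : point) : int :=
  match o with Hor => p.1 | Ver => p.2 end.

(* A path with (at most) two bends, given by its 4 corner points
   q0 (start), q1, q2 (bends), q3 (end). *)
Record path2 := Path2 { q0 : point; q1 : point; q2 : point; q3 : point }.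
Definition pt (P : path2) (i : nat) : point :=
  match i with 0 => q0 P | 1 => q1 P | 2 => q2 P | _ => q3 P end.

Definition along (o : orient) (p q : point) : Prop :=
  line o p = line o q /\ pos o p <> pos o q.

Definition two_bend_path (P : path2) : Prop :=
  (forall i, (i < 3)%N -> exists o, along o (pt P i) (pt P i.+1)) /\
  (forall i o, (i < 2)%N -> along o (pt P i) (pt P i.+1) ->
               ~ along o (pt P i.+1) (pt P i.+2)).

(* Grid edges: the unit segment on line ge_line (orientation ge_or)
   between positions ge_pos and ge_pos + 1. *)
Record gedge := GEdge { ge_or : orient; ge_line : int; ge_pos : int }.

Definition seg_has_edge (p q : point) (e : gedge) : Prop :=
  along (ge_or e) p q /\ line (ge_or e) p = ge_line e /\
  ((pos (ge_or e) p <= ge_pos e /\ ge_pos e + 1 <= pos (ge_or e) q) \/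
   (pos (ge_or e) q <= ge_pos e /\ ge_pos e + 1 <= pos (ge_or e) p)).

Definition path_has_edge (P : path2) (e : gedge) : Prop :=
  exists i, (i < 3)%N /\ seg_has_edge (pt P i) (pt P i.+1) e.

Definition share (P Q : path2) : Prop :=
  exists e, path_has_edge P e /\ path_has_edge Q e.

Definition intersects_line (P : path2) (o : orient) (a : int) : Prop :=
  exists e, ge_or e = o /\ ge_line e = a /\ path_has_edge P e.

Definition exactly_one_line (P : path2) (o : orient) : Prop :=
  exists a, forall r, intersects_line P o r <-> r = a.
Definition exactly_two_lines (P : path2) (o : orient) : Prop :=
  exists a b, a <> b /\ forall r, intersects_line P o r <-> (r = a \/ r = b).

Definition Z_vertex (P : path2) : Prop :=
  exactly_two_lines P Hor /\ exactly_one_line P Ver.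
Definition U_vertex (P : path2) : Prop :=
  exactly_one_line P Hor /\ exactly_two_lines P Ver.

Definition index_is_single (P : path2) (a : int) : Prop :=
  forall r, intersects_line P Hor r <-> r = a.

(* Types: TE = empty type, TD = d, TU = u. *)
Inductive ttype := TE | TD | TU.

(* A typed interval [x alpha, y beta] on line ti_line of orientation ti_or. *)
Record tinterval := TI {
  ti_or : orient; ti_line : int;
  ti_a : int; ti_x : ttype;
  ti_b : int; ti_y : ttype }.

Definition ti_wf (t : tinterval) : Prop := ti_a t <= ti_b t.

Inductive side := Lft | Rgt.
Definition endpoint_pos (t : tinterval) (s : side) : int :=
  match s with Lft => ti_a t | Rgt => ti_b t end.
Definition endpoint_type (t : tinterval) (s : side) : ttype :=
  match s with Lft => ti_x t | Rgt => ti_y t end.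

Definition coherent (t t' : tinterval) (s : side) : Prop :=
  let g := endpoint_pos t' s in
  let z := endpoint_type t' s in
  (ti_a t < g /\ g < ti_b t) \/
  (z = TE /\ ti_a t' < ti_b t' /\
     (* the grid edge of [alpha', beta'] incident to g lies in [alpha, beta] *)
     match s with
     | Lft => ti_a t <= g /\ g + 1 <= ti_b t
     | Rgt => ti_a t <= g - 1 /\ g <= ti_b t
     end) \/
  (z <> TE /\ ((z = ti_x t /\ g = ti_a t) \/ (z = ti_y t /\ g = ti_b t))).

Definition same_line (t t' : tinterval) : Prop :=
  ti_or t = ti_or t' /\ ti_line t = ti_line t'.

Definition ti_contains (t t' : tinterval) : Prop :=
  same_line t t' /\ ti_a t <= ti_a t' /\ ti_b t' <= ti_b t /\
  coherent t t' Lft /\ coherent t t' Rgt.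

Definition ti_intersects (t t' : tinterval) : Prop :=
  same_line t t' /\
  ((exists g, ti_a t <= g /\ ti_a t' <= g /\ g + 1 <= ti_b t /\ g + 1 <= ti_b t') \/
   (exists s, coherent t t' s) \/ (exists s, coherent t' t s)).

Definition bend_type (o : orient) (q r : point) : ttype :=
  if line o r < line o q then TD else TU.
Definition start_type (P : path2) (i : nat) (o : orient) : ttype :=
  if i is k.+1 then bend_type o (pt P i) (pt P k) else TE.
Definition end_type (P : path2) (i : nat) (o : orient) : ttype :=
  if i.+1 == 3%N then TE else bend_type o (pt P i.+1) (pt P i.+2).

Definition tproj (P : path2) (o : orient) (a : int) (t : tinterval) : Prop :=
  exists i, (i < 3)%N /\ along o (pt P i) (pt P i.+1) /\ line o (pt P i) = a /\
    t = (if pos o (pt P i) < pos o (pt P i.+1)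
         then TI o a (pos o (pt P i)) (start_type P i o)
                     (pos o (pt P i.+1)) (end_type P i o)
         else TI o a (pos o (pt P i.+1)) (end_type P i o)
                     (pos o (pt P i)) (start_type P i o)).

Definition v_contains (P : path2) (t : tinterval) : Prop :=
  intersects_line P (ti_or t) (ti_line t) /\
  exists tp, tproj P (ti_or t) (ti_line t) tp /\ ti_contains tp t.
Definition v_intersects (P : path2) (t : tinterval) : Prop :=
  intersects_line P (ti_or t) (ti_line t) /\
  exists tp, tproj P (ti_or t) (ti_line t) tp /\ ti_intersects tp t.

From HB Require Import structures.
From mathcomp Require Import all_boot all_order all_algebra zify.
Set Implicit Arguments. Unset Strict Implicit. Unset Printing Implicit Defensive.
Import Order.TTheory GRing.Theory Num.Theory.
From Stdlib Require List.
From Stdlib Require Import Classical.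
Local Open Scope ring_scope.

(* The horizontal typed interval of S is the common part of the row-a segments of the
   vertices of X; each vertical one is the common part of the segments of X in one of the two
   columns of a fixed vertex v0 of X, present only when every vertex of X uses that column.
   Since X is a clique, two such segments overlap or touch at a point where both bend the same
   way, so the common part is a typed interval contained in all of them.
   A vertex containing a typed interval t and a vertex intersecting t share a grid edge: one on
   the line of t, or one on the perpendicular line through a common bend.  Conversely, a
   Z-vertex u adjacent to all of X either has a segment on row a, which then meets the
   horizontal common part (it overlaps it, or, when some vertex of X meets u only in the
   column of u, ends at its endpoint with the same bend type), or it meets every vertex of X in
   its unique column, which is then a column of v0 with a nonempty common part. *)

Definition common_unit (T T' : tinterval) : Prop :=
  exists g, ti_a T <= g /\ g + 1 <= ti_b T /\ ti_a T' <= g /\ g + 1 <= ti_b T'.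

Definition common_typed_endpoint (T T' : tinterval) : Prop :=
  exists s s', endpoint_pos T s = endpoint_pos T' s' /\
    endpoint_type T s = endpoint_type T' s' /\ endpoint_type T s <> TE.

Ltac case_coherent H := case: H => [?|[[? [? ?]]|[? [[? ?]|[? ?]]]]]; subst.

Ltac endpoint_witness :=
  first [ by exists Lft, Lft | by exists Lft, Rgt | by exists Rgt, Lft | by exists Rgt, Rgt ].

Lemma contains_intersects_common T T' t :
  ti_a T < ti_b T -> ti_a T' < ti_b T' -> ti_contains T t -> ti_intersects T' t ->
  common_unit T T' \/ common_typed_endpoint T T'.
Proof.
case: T => oT kT aT xT bT yT; case: T' => oT' kT' aT' xT' bT' yT'.
case: t => o k c x d y; rewrite /ti_contains /ti_intersects /common_unit /=.
move=> nT nT' [_ [l1 [l2 [cL cR]]]] [_ I].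
(* if some unit edge is common to both, so is the one starting at max aT aT' *)
have [m [maT [maT' mE]]] : exists m, aT <= m /\ aT' <= m /\ (m = aT \/ m = aT')
  by exists (Num.max aT aT'); lia.
case: I => [[g ?]|[[s C]|[s C]]]; first by left; exists g; lia.
all: move: C cL cR; rewrite /coherent; case: s => /= C cL cR; case_coherent C.
all: first [ by left; exists m; lia
           | case_coherent cL; try (exfalso; congruence);
             first [ by left; exists m; lia | right; endpoint_witness ]
           | case_coherent cR; try (exfalso; congruence);
             first [ by left; exists m; lia | right; endpoint_witness ] ].
Qed.

Lemma overlap_intersects (T t : tinterval) :
  same_line T t -> ti_a T < ti_b T -> ti_a T < ti_b t -> ti_a t < ti_b T ->
  ti_a t <= ti_b t -> ti_intersects T t.
Proof.
case: T => oT kT aT xT bT yT; case: t => o k c x d y /= sl h1 h2 h3 h4.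
split => //; case: (ltrP c d) => h5.
- by left; exists (Num.max aT c) => /=; lia.
- by right; left; exists Lft; rewrite /coherent /=; left; lia.
Qed.

Definition perp (o : orient) : orient := if o is Hor then Ver else Hor.

Lemma line_perp o p : line (perp o) p = pos o p. Proof. by case: o. Qed.
Lemma pos_perp o p : pos (perp o) p = line o p. Proof. by case: o. Qed.
Lemma perpK : involutive perp. Proof. by case. Qed.
Lemma neq_perp o o' : o' <> o -> o' = perp o. Proof. by case: o; case: o'. Qed.

Definition seg_tinterval (P : path2) (i : nat) (o : orient) (k : int) : tinterval :=
  if pos o (pt P i) < pos o (pt P i.+1)
  then TI o k (pos o (pt P i)) (start_type P i o) (pos o (pt P i.+1)) (end_type P i o)
  else TI o k (pos o (pt P i.+1)) (end_type P i o) (pos o (pt P i)) (start_type P i o).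

Lemma tprojE P o k T : tproj P o k T <-> exists i, (i < 3)%N /\
  along o (pt P i) (pt P i.+1) /\ line o (pt P i) = k /\ T = seg_tinterval P i o k.
Proof. by []. Qed.

Lemma seg_tinterval_props P i o k : along o (pt P i) (pt P i.+1) ->
  ti_or (seg_tinterval P i o k) = o /\ ti_line (seg_tinterval P i o k) = k /\
  ti_a (seg_tinterval P i o k) < ti_b (seg_tinterval P i o k).
Proof.
rewrite /seg_tinterval; set p := pt P i; set q := pt P i.+1.
by move=> [_ ne]; case: ltrP => h; do 2 split => //=; lia.
Qed.

Lemma tproj_props P o k T : tproj P o k T ->
  ti_or T = o /\ ti_line T = k /\ ti_a T < ti_b T.
Proof. by case=> i [_ [hal [_ ->]]]; apply: seg_tinterval_props. Qed.

Lemma tproj_path_edge P o k T g : tproj P o k T ->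
  ti_a T <= g -> g + 1 <= ti_b T -> path_has_edge P (GEdge o k g).
Proof.
case=> i [hi [hal [hl ->]]] h1 h2; exists i; split => //; split => //; split => //.
move: hal h1 h2; rewrite /seg_tinterval; set p := pt P i; set q := pt P i.+1.
by move=> [_ ne]; case: ltrP => ? /= ? ?; [left|right]; lia.
Qed.

Lemma path_edge_tproj P o k g : path_has_edge P (GEdge o k g) ->
  exists T, tproj P o k T /\ ti_a T <= g /\ g + 1 <= ti_b T.
Proof.
case=> i [hi]; rewrite /seg_has_edge; cbn [ge_or ge_line ge_pos] => -[hal [hl hr]].
exists (seg_tinterval P i o k); split; first by exists i.
move: hal hr; rewrite /seg_tinterval; set p := pt P i; set q := pt P i.+1.
by move=> [_ ne] hr; case: ltrP => ? /=; lia.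
Qed.

Lemma tproj_intersects_line P o k T : tproj P o k T -> intersects_line P o k.
Proof.
move=> h; have [_ [_ nd]] := tproj_props h.
by exists (GEdge o k (ti_a T)); do 2 split => //; apply: tproj_path_edge h _ _; lia.
Qed.

(* The unit edge of the line perpendicular to o through q that leaves q towards r. *)
Definition turn_edge (o : orient) (q r : point) : gedge :=
  GEdge (perp o) (pos o q) (if bend_type o q r is TU then line o q else line o q - 1).

Lemma seg_turn_edge o q r : along (perp o) q r -> seg_has_edge q r (turn_edge o q r).
Proof.
move=> [hl hp]; split=> //=; split; first by rewrite line_perp.
by move: hp; rewrite !pos_perp /bend_type; case: ltrP => /= ? ?; lia.
Qed.

Lemma alongC o p q : along o p q -> along o q p.
Proof. by case=> hl hp; split; [rewrite hl | move/esym]. Qed.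

Lemma seg_has_edgeC p q e : seg_has_edge p q e -> seg_has_edge q p e.
Proof.
case=> hal [hle hpos]; split; first exact: alongC.
by split; [rewrite -hal.1 | lia].
Qed.

Lemma two_bend_path_perp P j o : two_bend_path P -> (j < 2)%N ->
  (along o (pt P j) (pt P j.+1) -> along (perp o) (pt P j.+1) (pt P j.+2)) /\
  (along o (pt P j.+1) (pt P j.+2) -> along (perp o) (pt P j) (pt P j.+1)).
Proof.
move=> [hseg hturn] hj; split=> hal.
- have [o' ho'] := hseg j.+1 hj.
  suff <- : o' = perp o by [].
  by apply: neq_perp => eo; subst o'; apply: (hturn j o hj hal ho').
- have [o' ho'] := hseg j (ltn_trans hj (ltnSn 2)).
  suff <- : o' = perp o by [].
  by apply: neq_perp => eo; subst o'; apply: (hturn j o hj ho' hal).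
Qed.

Lemma tproj_turn_edge P o k T s : two_bend_path P -> tproj P o k T ->
  endpoint_type T s <> TE ->
  path_has_edge P (GEdge (perp o) (endpoint_pos T s)
    (if endpoint_type T s is TU then k else k - 1)).
Proof.
move=> hP [i [hi [hal [hl ->]]]].
have hl' : line o (pt P i.+1) = k by case: hal => <-.
have start_edge : start_type P i o <> TE ->
    path_has_edge P (GEdge (perp o) (pos o (pt P i))
      (if start_type P i o is TU then k else k - 1)).
  case: i hi hal hl {hl'} => [//|j] hj hal <- _.
  have [_ /(_ hal) hper] := two_bend_path_perp o hP hj.
  exists j; split; first by lia.
  by apply/seg_has_edgeC/seg_turn_edge/alongC.
have end_edge : end_type P i o <> TE ->
    path_has_edge P (GEdge (perp o) (pos o (pt P i.+1))
      (if end_type P i o is TU then k else k - 1)).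
  rewrite /end_type; case: eqP => [//|ne _].
  have hi2 : (i < 2)%N by lia.
  have [/(_ hal) hper _] := two_bend_path_perp o hP hi2.
  by rewrite -hl'; exists i.+1; split => //; apply: seg_turn_edge.
by rewrite /seg_tinterval; case: ltrP => _; case: s.
Qed.

Lemma contains_intersects_share P Q t : two_bend_path P -> two_bend_path Q ->
  v_contains P t -> v_intersects Q t -> share P Q.
Proof.
move=> hP hQ [_ [TP [hTP cont]]] [_ [TQ [hTQ inter]]].
have [_ [_ nP]] := tproj_props hTP; have [_ [_ nQ]] := tproj_props hTQ.
case: (contains_intersects_common nP nQ cont inter) =>
  [[g [g1 [g2 [g3 g4]]]]|[s [s' [e1 [e2 e3]]]]].
- exists (GEdge (ti_or t) (ti_line t) g).
  by split; [apply: tproj_path_edge hTP g1 g2 | apply: tproj_path_edge hTQ g3 g4].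
- exists (GEdge (perp (ti_or t)) (endpoint_pos TP s)
      (if endpoint_type TP s is TU then ti_line t else ti_line t - 1)); split.
  + exact: tproj_turn_edge hP hTP e3.
  + by rewrite e1 e2; apply: tproj_turn_edge hQ hTQ _; rewrite -e2.
Qed.

Lemma share_sym P Q : share P Q -> share Q P.
Proof. by move=> [e [h1 h2]]; exists e. Qed.

Lemma two_bend_path_orients P : two_bend_path P -> exists o,
  along o (pt P 0) (pt P 1) /\ along (perp o) (pt P 1) (pt P 2) /\ along o (pt P 2) (pt P 3).
Proof.
move=> hP; have [o a0] := hP.1 0%N erefl.
have [/(_ a0) a1 _] := two_bend_path_perp o hP (erefl : (0 < 2)%N).
have [/(_ a1) a2 _] := two_bend_path_perp (perp o) hP (erefl : (1 < 2)%N).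
by exists o; rewrite perpK in a2.
Qed.

Lemma along_intersects_line P o i : (i < 3)%N -> along o (pt P i) (pt P i.+1) ->
  intersects_line P o (line o (pt P i)).
Proof.
by move=> hi hal; apply: (@tproj_intersects_line _ _ _ (seg_tinterval P i o _)); exists i.
Qed.

Definition U_shape (P : path2) (a : int) : Prop := exists x1 x2 y0 y3,
  P = Path2 (x1, y0) (x1, a) (x2, a) (x2, y3) /\ x1 <> x2 /\ y0 <> a /\ y3 <> a.

Definition Z_shape (P : path2) : Prop := exists x0 c x3 r1 r2,
  P = Path2 (x0, r1) (c, r1) (c, r2) (x3, r2) /\ x0 <> c /\ x3 <> c /\ r1 <> r2.

Ltac unfold_coords := unfold along, line, pos in *; simpl in *.

Lemma index_single_U_shape P a : two_bend_path P -> index_is_single P a -> U_shape P a.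
Proof.
move=> hP hI; have [o [a0 [a1 a2]]] := two_bend_path_orients hP.
have i0 := along_intersects_line (erefl : (0 < 3)%N) a0.
have i1 := along_intersects_line (erefl : (1 < 3)%N) a1.
have i2 := along_intersects_line (erefl : (2 < 3)%N) a2.
move: hI a0 a1 a2 i0 i1 i2; case: P hP => [[x0 y0] [x1 y1] [x2 y2] [x3 y3]] _ hI.
case: o => /= [[e0 n0] [e1 n1] [e2 n2]|[e0 n0] [e1 n1] [e2 n2]] i0 i1 i2;
  rewrite /line /pos /= in e0 n0 e1 n1 e2 n2 i0 i1 i2.
- by move/hI: i0 => /=; move/hI: i2 => /=; lia.
- move/hI: i1 => /= ha.
  by exists x1, x2, y0, y3; split; [congr Path2; congr pair; lia | lia].
Qed.

Lemma Z_vertex_shape P : two_bend_path P -> Z_vertex P -> Z_shape P.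
Proof.
move=> hP [_ [c hI]]; have [o [a0 [a1 a2]]] := two_bend_path_orients hP.
have i0 := along_intersects_line (erefl : (0 < 3)%N) a0.
have i2 := along_intersects_line (erefl : (2 < 3)%N) a2.
move: hI a0 a1 a2 i0 i2; case: P hP => [[x0 y0] [x1 y1] [x2 y2] [x3 y3]] _ hI.
case: o => /= [[e0 n0] [e1 n1] [e2 n2]|[e0 n0] [e1 n1] [e2 n2]] i0 i2;
  rewrite /line /pos /= in e0 n0 e1 n1 e2 n2 i0 i2.
- by exists x0, x1, x3, y1, y3; split; [congr Path2; congr pair; lia | lia].
- by move/hI: i0 => /=; move/hI: i2 => /=; lia.
Qed.

Lemma Z_shape_not_index_single P a : Z_shape P -> ~ index_is_single P a.
Proof.
move=> [x0 [c [x3 [r1 [r2 [-> [n0 [n3 n12]]]]]]]] hI.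
have h0 : along Hor (pt (Path2 (x0, r1) (c, r1) (c, r2) (x3, r2)) 0)
                    (pt (Path2 (x0, r1) (c, r1) (c, r2) (x3, r2)) 1) by unfold_coords; lia.
have h2 : along Hor (pt (Path2 (x0, r1) (c, r1) (c, r2) (x3, r2)) 2)
                    (pt (Path2 (x0, r1) (c, r1) (c, r2) (x3, r2)) 3) by unfold_coords; lia.
move/(along_intersects_line (erefl : (0 < 3)%N))/hI: h0.
move/(along_intersects_line (erefl : (2 < 3)%N))/hI: h2.
by rewrite /line /=; lia.
Qed.

Definition U_row_seg (P : path2) : tinterval := seg_tinterval P 1 Hor (q1 P).2.
Definition U_left (P : path2) : int := ti_a (U_row_seg P).
Definition U_right (P : path2) : int := ti_b (U_row_seg P).
Definition U_col_seg (P : path2) (c : int) : tinterval :=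
  if c == (q1 P).1 then seg_tinterval P 0 Ver c else seg_tinterval P 2 Ver c.

Definition is_U_col (Q : path2) (c : int) : Prop := c = U_left Q \/ c = U_right Q.

Definition Z_col (P : path2) : int := (q1 P).1.
Definition Z_col_seg (P : path2) : tinterval := seg_tinterval P 1 Ver (q1 P).1.

Ltac case_coords := repeat (unfold U_col_seg, U_row_seg, U_left, U_right, Z_col_seg,
  seg_tinterval, start_type, end_type, bend_type, line, pos; simpl; match goal with
  | |- context [if ?x < ?y then _ else _] => case: (ltrP x y) => ?
  | |- context [?x == ?y :> int] => case: (x =P y) => ?
  end); simpl.

Ltac solve_coords := first [ exfalso; lia | reflexivity | discriminate | lia
  | split; [solve_coords | solve_coords] | left; solve_coords | right; solve_coords ].

Lemma tproj_U_row P a k T : U_shape P a -> tproj P Hor k T <-> k = a /\ T = U_row_seg P.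
Proof.
move=> [x1 [x2 [y0 [y3 [-> [n12 [n0 n3]]]]]]]; rewrite tprojE; split.
- by case=> [[|[|[|i]]]] [hi [hal [hl ->]]] //; unfold_coords; try lia; subst.
- by case=> -> ->; exists 1%N; unfold_coords; do !split => //; lia.
Qed.

Lemma tproj_U_col P a k T : U_shape P a ->
  tproj P Ver k T <-> is_U_col P k /\ T = U_col_seg P k.
Proof.
move=> [x1 [x2 [y0 [y3 [-> [n12 [n0 n3]]]]]]].
set Q := Path2 _ _ _ _; rewrite /is_U_col.
have -> : U_left Q = Num.min x1 x2.
  by rewrite /U_left /U_row_seg /seg_tinterval /=; case: ltrP => /=; lia.
have -> : U_right Q = Num.max x1 x2.
  by rewrite /U_right /U_row_seg /seg_tinterval /=; case: ltrP => /=; lia.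
rewrite tprojE /U_col_seg /=; split.
- case=> [[|[|[|i]]]] [hi [hal [hl ->]]] //; unfold_coords; try lia; subst k.
  + by rewrite eqxx; split => //; lia.
  + have -> : (x2 == x1) = false by apply/eqP => h; lia.
    by split => //; lia.
- case=> hk ->; case: (x1 =P k) => [<-|hne].
  + by rewrite eqxx; exists 0%N; unfold_coords; do !split => //; lia.
  + have -> : (k == x1) = false by apply/eqP => h; lia.
    by exists 2%N; unfold_coords; do !split => //; lia.
Qed.

Lemma U_row_seg_props P a : U_shape P a ->
  ti_or (U_row_seg P) = Hor /\ ti_line (U_row_seg P) = a /\ U_left P < U_right P.
Proof. by move=> [x1 [x2 [y0 [y3 [-> [n12 [n0 n3]]]]]]]; case_coords; solve_coords. Qed.

Lemma U_left_turn P a : U_shape P a ->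
  (ti_x (U_row_seg P) = TU /\ ti_a (U_col_seg P (U_left P)) = a /\
     ti_x (U_col_seg P (U_left P)) = TU) \/
  (ti_x (U_row_seg P) = TD /\ ti_b (U_col_seg P (U_left P)) = a /\
     ti_y (U_col_seg P (U_left P)) = TU).
Proof. by move=> [x1 [x2 [y0 [y3 [-> [n12 [n0 n3]]]]]]]; case_coords; solve_coords. Qed.

Lemma U_right_turn P a : U_shape P a ->
  (ti_y (U_row_seg P) = TU /\ ti_a (U_col_seg P (U_right P)) = a /\
     ti_x (U_col_seg P (U_right P)) = TD) \/
  (ti_y (U_row_seg P) = TD /\ ti_b (U_col_seg P (U_right P)) = a /\
     ti_y (U_col_seg P (U_right P)) = TD).
Proof. by move=> [x1 [x2 [y0 [y3 [-> [n12 [n0 n3]]]]]]]; case_coords; solve_coords. Qed.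

Lemma U_col_seg_props P a c : U_shape P a -> is_U_col P c ->
  [/\ tproj P Ver c (U_col_seg P c), ti_or (U_col_seg P c) = Ver,
      ti_line (U_col_seg P c) = c, ti_a (U_col_seg P c) < ti_b (U_col_seg P c)
    & ti_a (U_col_seg P c) <= a <= ti_b (U_col_seg P c)].
Proof.
move=> hU hc; have tp : tproj P Ver c (U_col_seg P c) by apply/(tproj_U_col _ _ hU).
have [h1 [h2 h3]] := tproj_props tp; split => //.
by case: hc h3 => -> h3; [case: (U_left_turn hU) | case: (U_right_turn hU)];
  move=> [_ [h _]]; apply/andP; lia.
Qed.

Lemma tproj_Z_col P k T : Z_shape P -> tproj P Ver k T <-> k = Z_col P /\ T = Z_col_seg P.
Proof.
move=> [x0 [c [x3 [r1 [r2 [-> [n0 [n3 n12]]]]]]]]; rewrite tprojE; split.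
- by case=> [[|[|[|i]]]] [hi [hal [hl ->]]] //; unfold_coords; try lia; subst.
- by case=> -> ->; exists 1%N; unfold_coords; do !split => //; lia.
Qed.

Lemma tproj_Z_row_uniq P k T T' : Z_shape P -> tproj P Hor k T -> tproj P Hor k T' -> T = T'.
Proof.
move=> [x0 [c [x3 [r1 [r2 [-> [n0 [n3 n12]]]]]]]]; rewrite !tprojE.
case=> [[|[|[|i]]]] [hi [hal [hl ->]]] //;
case=> [[|[|[|j]]]] [hj [hal' [hl' ->]]] //; unfold_coords; lia.
Qed.

Lemma tproj_Z_row_turn P a T : Z_shape P -> tproj P Hor a T -> exists d, d <> TE /\
  ((ti_b T = Z_col P /\ ti_y T = d /\ ti_x T = TE) \/
   (ti_a T = Z_col P /\ ti_x T = d /\ ti_y T = TE)) /\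
  ((d = TU /\ ti_a (Z_col_seg P) = a) \/ (d = TD /\ ti_b (Z_col_seg P) = a)).
Proof.
move=> [x0 [c [x3 [r1 [r2 [-> [n0 [n3 n12]]]]]]]]; rewrite tprojE /Z_col.
case=> [[|[|[|i]]]] [hi [hal [hl ->]]] //; unfold_coords; try lia.
- by exists (if r2 < r1 then TD else TU); case_coords; subst; solve_coords.
- by exists (if r1 < r2 then TD else TU); case_coords; subst; solve_coords.
Qed.

Lemma coherent_meet_Lft T t :
  ti_a T < ti_b T -> ti_a T <= ti_a t -> ti_a t <= ti_b t -> ti_b t <= ti_b T ->
  (ti_a T = ti_a t -> ti_x t <> TE -> ti_x T = ti_x t) ->
  (ti_x t = TE -> ti_a t < ti_b t) ->
  (ti_b T = ti_a t -> ti_y T = ti_x t) -> coherent T t Lft.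
Proof.
case: T t => oT kT aT xT bT yT [o k c x d y]; rewrite /coherent /= => nT h1 h2 h3 hx hdeg hy.
case: (ltrP aT c) => [lt_aT_c | le_c_aT].
- case: (ltrP c bT) => [lt_c_bT | le_bT_c]; first by left.
  have xE : x <> TE by move=> /hdeg; lia.
  by right; right; split=> //; right; split; [rewrite hy //; lia | lia].
- have e : aT = c by lia.
  case: x hx hdeg {hy} => hx hdeg.
  + by right; left; split => //; have := hdeg erefl; lia.
  + by right; right; split => //; left; split; [rewrite hx | rewrite e].
  + by right; right; split => //; left; split; [rewrite hx | rewrite e].
Qed.

Lemma coherent_meet_Rgt T t :
  ti_a T < ti_b T -> ti_a T <= ti_a t -> ti_a t <= ti_b t -> ti_b t <= ti_b T ->
  (ti_b T = ti_b t -> ti_y t <> TE -> ti_y T = ti_y t) ->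
  (ti_y t = TE -> ti_a t < ti_b t) ->
  (ti_a T = ti_b t -> ti_x T = ti_y t) -> coherent T t Rgt.
Proof.
case: T t => oT kT aT xT bT yT [o k c x d y]; rewrite /coherent /= => nT h1 h2 h3 hy hdeg hx.
case: (ltrP d bT) => [lt_d_bT | le_bT_d].
- case: (ltrP aT d) => [lt_aT_d | le_d_aT]; first by left.
  have yE : y <> TE by move=> /hdeg; lia.
  by right; right; split=> //; left; split; [rewrite hx //; lia | lia].
- have e : bT = d by lia.
  case: y hy hdeg {hx} => hy hdeg.
  + by right; left; split => //; have := hdeg erefl; lia.
  + by right; right; split => //; right; split; [rewrite hy | rewrite e].
  + by right; right; split => //; right; split; [rewrite hy | rewrite e].
Qed.

Lemma common_type (V : finType) (X : {set V}) (F : V -> ttype) (D : V -> Prop) :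
  exists x, (x <> TE -> forall v, v \in X -> D v -> F v = x) /\
    forall d, (exists2 v, v \in X & D v) -> (forall v, v \in X -> D v -> F v = d) -> x = d.
Proof.
case: (classic (exists d, forall v, v \in X -> D v -> F v = d)) => [[d hd]|hn].
- exists d; split => // d' [v vX Dv] hd'.
  by rewrite -(hd v vX Dv) (hd' v vX Dv).
- by exists TE; split => // d _ hd; case: hn; exists d.
Qed.

Lemma tinterval_meet (V : finType) (X : {set V}) (f : V -> tinterval) o k :
  X != set0 ->
  (forall v, v \in X -> ti_or (f v) = o /\ ti_line (f v) = k /\ ti_a (f v) < ti_b (f v)) ->
  (forall v w, v \in X -> w \in X -> ti_a (f v) <= ti_b (f w)) ->
  (forall v w, v \in X -> w \in X -> ti_a (f v) = ti_b (f w) ->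
     ti_x (f v) = ti_y (f w) /\ ti_x (f v) <> TE) ->
  exists t, ti_or t = o /\ ti_line t = k /\ ti_wf t /\
   (exists2 v1, v1 \in X & ti_a t = ti_a (f v1)) /\
   (exists2 v2, v2 \in X & ti_b t = ti_b (f v2)) /\
   (forall v, v \in X -> ti_a (f v) <= ti_a t /\ ti_b t <= ti_b (f v)) /\
   (forall v, v \in X -> ti_contains (f v) t) /\
   (forall d, (forall v, v \in X -> ti_a (f v) = ti_a t -> ti_x (f v) = d) -> ti_x t = d) /\
   (forall d, (forall v, v \in X -> ti_b (f v) = ti_b t -> ti_y (f v) = d) -> ti_y t = d).
Proof.
move=> /set0Pn [v0 v0X] hf hle hdeg.
have [v1 v1X hv1] := arg_maxP (fun v => ti_a (f v)) v0X.
have [v2 v2X hv2] := arg_minP (fun v => ti_b (f v)) v0X.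
set al := ti_a (f v1) in hv1 *; set be := ti_b (f v2) in hv2 *.
have [x [hx1 hx2]] := common_type X (fun v => ti_x (f v)) (fun v => ti_a (f v) = al).
have [y [hy1 hy2]] := common_type X (fun v => ti_y (f v)) (fun v => ti_b (f v) = be).
have hx : forall d, (forall v, v \in X -> ti_a (f v) = al -> ti_x (f v) = d) -> x = d.
  by move=> d; apply: hx2; exists v1.
have hy : forall d, (forall v, v \in X -> ti_b (f v) = be -> ti_y (f v) = d) -> y = d.
  by move=> d; apply: hy2; exists v2.
have ex1 := hdeg v1 v2 v1X v2X.
(* a degenerate meet is a single point where all the intervals bend the same way *)
have degE : al = be -> x = ti_x (f v1) /\ y = ti_x (f v1) /\ ti_x (f v1) <> TE.
  move=> e; have [e1 n1] := ex1 e; split; last split => //.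
  - by apply: hx => v vX ev; rewrite (hdeg v v2 vX v2X (etrans ev e)).1.
  - by apply: hy => v vX ev; rewrite (hdeg v1 v v1X vX (etrans e (esym ev))).1.
exists (TI o k al x be y) => /=.
split => //; split => //; split; first exact: hle.
split; first by exists v1.
split; first by exists v2.
split; first by move=> v vX; split; [apply: hv1 | apply: hv2].
split; last by split; [apply: hx | apply: hy].
move=> v vX; have [ho [hk hnd]] := hf v vX.
have [l1 l2] := (hv1 v vX, hv2 v vX); have albe := hle v1 v2 v1X v2X.
split; first by split.
split; first exact: l1.
split; first exact: l2.
split.
- apply: coherent_meet_Lft => //= [ea|xE|ebv].
  + by move=> xnE; rewrite (hx1 xnE v vX ea).
  + case: (ltrP al be) => // ?; have [xv1 [_ nv1]] := degE ltac:(lia).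
    by rewrite -xv1 in nv1.
  + have [xE _] := degE ltac:(lia).
    by rewrite xE (hdeg v1 v v1X vX ltac:(lia)).1.
- apply: coherent_meet_Rgt => //= [eb|yE|eav].
  + by move=> ynE; rewrite (hy1 ynE v vX eb).
  + case: (ltrP al be) => // ?; have [_ [yv1 nv1]] := degE ltac:(lia).
    by rewrite -yv1 in nv1.
  + have [_ [yE _]] := degE ltac:(lia).
    by rewrite yE (hdeg v v2 vX v2X ltac:(lia)).1 (ex1 ltac:(lia)).1.
Qed.

Definition overlaps_U_row (T : tinterval) (Q : path2) : Prop :=
  ti_a T < U_right Q /\ U_left Q < ti_b T.

Definition overlaps_U_col (T : tinterval) (Q : path2) (c : int) : Prop :=
  ti_a T < ti_b (U_col_seg Q c) /\ ti_a (U_col_seg Q c) < ti_b T.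

Lemma U_col_seg_types P a c : U_shape P a -> is_U_col P c ->
  (ti_a (U_col_seg P c) = a ->
     (c = U_left P /\ ti_x (U_col_seg P c) = TU) \/
     (c = U_right P /\ ti_x (U_col_seg P c) = TD)) /\
  (ti_b (U_col_seg P c) = a ->
     (c = U_left P /\ ti_y (U_col_seg P c) = TU) \/
     (c = U_right P /\ ti_y (U_col_seg P c) = TD)).
Proof.
move=> hU hc; have [_ _ _ nd _] := U_col_seg_props hU hc.
case: hc nd => -> nd.
- by split=> e; left; split => //; case: (U_left_turn hU) => -[_ [h ht]];
    rewrite ?ht //; exfalso; lia.
- by split=> e; right; split => //; case: (U_right_turn hU) => -[_ [h ht]];
    rewrite ?ht //; exfalso; lia.
Qed.

Lemma share_U_U P Q a : U_shape P a -> U_shape Q a -> share P Q ->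
  overlaps_U_row (U_row_seg P) Q \/
  exists2 c, is_U_col P c /\ is_U_col Q c & overlaps_U_col (U_col_seg P c) Q c.
Proof.
move=> hP hQ [[o k g] [eP eQ]].
have [TP [tP [g1 g2]]] := path_edge_tproj eP; have [TQ [tQ [g3 g4]]] := path_edge_tproj eQ.
case: o tP tQ {eP eQ} => tP tQ.
- move/(tproj_U_row _ _ hP): tP => [_ E1]; move/(tproj_U_row _ _ hQ): tQ => [_ E2]; subst.
  by left; rewrite /overlaps_U_row /U_left /U_right; lia.
- move/(tproj_U_col _ _ hP): tP => [c1 E1]; move/(tproj_U_col _ _ hQ): tQ => [c2 E2]; subst.
  by right; exists k => //; rewrite /overlaps_U_col; lia.
Qed.

Lemma share_Z_U P Q a : Z_shape P -> U_shape Q a -> share P Q ->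
  (exists Tu, tproj P Hor a Tu /\ overlaps_U_row Tu Q) \/
  (is_U_col Q (Z_col P) /\ overlaps_U_col (Z_col_seg P) Q (Z_col P)).
Proof.
move=> hP hQ [[o k g] [eP eQ]].
have [TP [tP [g1 g2]]] := path_edge_tproj eP; have [TQ [tQ [g3 g4]]] := path_edge_tproj eQ.
case: o tP tQ {eP eQ} => tP tQ.
- move/(tproj_U_row _ _ hQ): tQ => [ek E2]; subst.
  by left; exists TP; split => //; rewrite /overlaps_U_row /U_left /U_right; lia.
- move/(tproj_Z_col _ _ hP): tP => [ek E1]; move/(tproj_U_col _ _ hQ): tQ => [c2 E2]; subst.
  by right; split => //; rewrite /overlaps_U_col; lia.
Qed.

Lemma count_hor_ver (s : seq tinterval) : (forall t, List.In t s -> ti_or t = Ver) ->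
  count (fun t => is_hor (ti_or t)) s = 0%N.
Proof.
elim: s => [//|t s IH] h /=.
by rewrite (h t (or_introl erefl)) IH // => t' ht'; apply: h; right.
Qed.

Section UClique.

Variables (V : finType) (P : V -> path2) (X : {set V}) (a : int).
Hypothesis X_U : forall v, v \in X -> U_shape (P v) a.
Hypothesis X_share : forall v w, v \in X -> w \in X -> v <> w -> share (P v) (P w).

Section ZNeighbour.

Variable u : V.
Hypothesis uZ : Z_shape (P u).
Hypothesis u_share : forall v, v \in X -> share (P u) (P v).

Lemma Z_col_of_row_gap Tu v : tproj (P u) Hor a Tu -> v \in X -> ~ overlaps_U_row Tu (P v) ->
  is_U_col (P v) (Z_col (P u)) /\ overlaps_U_col (Z_col_seg (P u)) (P v) (Z_col (P u)).
Proof.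
move=> hTu vX nv; case: (share_Z_U uZ (X_U vX) (u_share vX)) => // -[Tu' [hTu' ov]].
by rewrite (tproj_Z_row_uniq uZ hTu hTu') in nv.
Qed.

Lemma Z_col_of_no_row v : (forall T, ~ tproj (P u) Hor a T) -> v \in X ->
  is_U_col (P v) (Z_col (P u)) /\ overlaps_U_col (Z_col_seg (P u)) (P v) (Z_col (P u)).
Proof.
move=> noH vX; case: (share_Z_U uZ (X_U vX) (u_share vX)) => // -[Tu [hTu _]].
by case: (noH Tu).
Qed.

Lemma Z_col_intersects c (Sc : seq tinterval) :
  ((forall v, v \in X -> is_U_col (P v) c) ->
     exists t, List.In t Sc /\ ti_or t = Ver /\ ti_line t = c /\
       forall T, ti_or T = Ver -> ti_line T = c -> ti_a T < ti_b T ->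
         (forall v, v \in X -> overlaps_U_col T (P v) c) -> ti_intersects T t) ->
  Z_col (P u) = c -> (forall T, ~ tproj (P u) Hor a T) ->
  exists2 t, List.In t Sc & v_intersects (P u) t.
Proof.
move=> Sc_col ec noH; subst c.
have hZcol : tproj (P u) Ver (Z_col (P u)) (Z_col_seg (P u)) by apply/(tproj_Z_col _ _ uZ).
have [t_or [t_line nd]] := tproj_props hZcol.
have [|t [tS [t_or' [t_line' t_int]]]] := Sc_col; first by move=> v /(Z_col_of_no_row noH) [].
exists t => //; rewrite /v_intersects t_or' t_line'.
split; first exact: tproj_intersects_line hZcol.
exists (Z_col_seg (P u)); split => //.
by apply: t_int => // v /(Z_col_of_no_row noH) [].
Qed.

Section RowSeg.

Variables (Tu : tinterval) (d : ttype).
Hypothesis hTu : tproj (P u) Hor a Tu.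
Hypothesis d_side :
  (d = TU /\ ti_a (Z_col_seg (P u)) = a) \/ (d = TD /\ ti_b (Z_col_seg (P u)) = a).

Lemma Z_row_gap_Rgt : ti_b Tu = Z_col (P u) ->
  forall v, v \in X -> ~ overlaps_U_row Tu (P v) ->
  Z_col (P u) = U_left (P v) /\ ti_x (U_row_seg (P v)) = d.
Proof.
move=> eb v vX nv; have [hc [o1 o2]] := Z_col_of_row_gap hTu vX nv.
have [_ [_ nd]] := tproj_props hTu; have [_ [_ lr]] := U_row_seg_props (X_U vX).
have ec : Z_col (P u) = U_left (P v).
  by case: hc => // ec; case: nv; rewrite /overlaps_U_row; lia.
split => //; rewrite ec in o1 o2.
case: (U_left_turn (X_U vX)) => [[x1 [a1 _]]|[x1 [a1 _]]];
case: d_side => [[dU aZ]|[dD bZ]]; rewrite x1 ?dU ?dD //; lia.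
Qed.

Lemma Z_row_gap_Lft : ti_a Tu = Z_col (P u) ->
  forall v, v \in X -> ~ overlaps_U_row Tu (P v) ->
  Z_col (P u) = U_right (P v) /\ ti_y (U_row_seg (P v)) = d.
Proof.
move=> ea v vX nv; have [hc [o1 o2]] := Z_col_of_row_gap hTu vX nv.
have [_ [_ nd]] := tproj_props hTu; have [_ [_ lr]] := U_row_seg_props (X_U vX).
have ec : Z_col (P u) = U_right (P v).
  by case: hc => // ec; case: nv; rewrite /overlaps_U_row; lia.
split => //; rewrite ec in o1 o2.
case: (U_right_turn (X_U vX)) => [[x1 [a1 _]]|[x1 [a1 _]]];
case: d_side => [[dU aZ]|[dD bZ]]; rewrite x1 ?dU ?dD //; lia.
Qed.

End RowSeg.

Section RowMeet.

Variable tH : tinterval.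
Hypotheses (tH_or : ti_or tH = Hor) (tH_line : ti_line tH = a) (tH_wf : ti_wf tH).
Hypothesis tH_left : exists2 v1, v1 \in X & ti_a tH = U_left (P v1).
Hypothesis tH_right : exists2 v2, v2 \in X & ti_b tH = U_right (P v2).
Hypothesis tH_bounds :
  forall v, v \in X -> U_left (P v) <= ti_a tH /\ ti_b tH <= U_right (P v).
Hypothesis tH_x : forall d,
  (forall v, v \in X -> U_left (P v) = ti_a tH -> ti_x (U_row_seg (P v)) = d) -> ti_x tH = d.
Hypothesis tH_y : forall d,
  (forall v, v \in X -> U_right (P v) = ti_b tH -> ti_y (U_row_seg (P v)) = d) -> ti_y tH = d.

Lemma Z_row_intersects Tu : tproj (P u) Hor a Tu -> v_intersects (P u) tH.
Proof.
move=> hTu; have [Tu_or [Tu_line nd]] := tproj_props hTu.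
rewrite /v_intersects tH_or tH_line; split; first exact: tproj_intersects_line hTu.
exists Tu; split => //.
have [[v1 v1X e1] [v2 v2X e2]] := (tH_left, tH_right).
have sl : same_line Tu tH by split; rewrite ?Tu_or ?Tu_line.
case: (classic (forall v, v \in X -> overlaps_U_row Tu (P v))) => [allov|notall].
  apply: overlap_intersects => //.
  - by rewrite e2; case: (allov v2 v2X).
  - by rewrite e1; case: (allov v1 v1X).
have [w wX nw] : exists2 w, w \in X & ~ overlaps_U_row Tu (P w).
  by apply: NNPP => hn; apply: notall => v vX; apply: NNPP => hv; apply: hn; exists v.
have [d [dnTE [[[eb [ey _]]|[ea [ex _]]] d_side]]] := tproj_Z_row_turn uZ hTu;
  split => //; right; right.
- have gap := Z_row_gap_Rgt hTu d_side eb.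
  have [ew _] := gap w wX nw; have [bw _] := tH_bounds wX.
  have [e1' _] : Z_col (P u) = U_left (P v1) /\ _ := gap v1 v1X ltac:(case; lia).
  have xd : ti_x tH = d by apply: tH_x => v vX ev; apply: (gap v vX _).2; case; lia.
  exists Rgt; rewrite /coherent /=; right; right; split; first by rewrite ey.
  by left; split; [rewrite ey xd | lia].
- have gap := Z_row_gap_Lft hTu d_side ea.
  have [ew _] := gap w wX nw; have [_ bw] := tH_bounds wX.
  have [e2' _] : Z_col (P u) = U_right (P v2) /\ _ := gap v2 v2X ltac:(case; lia).
  have yd : ti_y tH = d by apply: tH_y => v vX ev; apply: (gap v vX _).2; case; lia.
  exists Lft; rewrite /coherent /=; right; right; split; first by rewrite ex.
  by right; split; [rewrite ex yd | lia].
Qed.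

End RowMeet.

End ZNeighbour.

Section Meets.

Hypothesis X_neq0 : X != set0.

Lemma U_row_meet : exists t, ti_or t = Hor /\ ti_line t = a /\ ti_wf t /\
   (exists2 v1, v1 \in X & ti_a t = U_left (P v1)) /\
   (exists2 v2, v2 \in X & ti_b t = U_right (P v2)) /\
   (forall v, v \in X -> U_left (P v) <= ti_a t /\ ti_b t <= U_right (P v)) /\
   (forall v, v \in X -> ti_contains (U_row_seg (P v)) t) /\
   (forall d, (forall v, v \in X -> U_left (P v) = ti_a t -> ti_x (U_row_seg (P v)) = d) ->
      ti_x t = d) /\
   (forall d, (forall v, v \in X -> U_right (P v) = ti_b t -> ti_y (U_row_seg (P v)) = d) ->
      ti_y t = d).
Proof.
apply: (@tinterval_meet V X (fun v => U_row_seg (P v))) => // [v vX|v w vX wX|v w vX wX /= e].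
- exact: U_row_seg_props (X_U vX).
- have [_ [_ h1]] := U_row_seg_props (X_U vX); have [_ [_ h2]] := U_row_seg_props (X_U wX).
  case: (v =P w) => [<-|ne]; first by rewrite /U_left /U_right in h1; lia.
  case: (share_U_U (X_U vX) (X_U wX) (X_share vX wX ne)) => [[o1 o2]|[c [hc1 hc2] _]].
  + by rewrite /U_left /U_right in o1 o2; lia.
  + by rewrite /is_U_col /U_left /U_right in h1 h2 hc1 hc2; lia.
- have [_ [_ h1]] := U_row_seg_props (X_U vX); have [_ [_ h2]] := U_row_seg_props (X_U wX).
  change (U_left (P v) = U_right (P w)) in e.
  have ne : v <> w by move=> ew; subst w; lia.
  case: (share_U_U (X_U vX) (X_U wX) (X_share vX wX ne)) => [[o1 o2]|[c [hc1 hc2] [ov1 ov2]]].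
  + by move: o1; rewrite -/(U_left (P v)); lia.
  (* the two row segments touch at a column shared by both, which both leave on the same side *)
  have ec1 : c = U_left (P v) by case: hc1; case: hc2; rewrite /U_left /U_right in e h1 h2 *; lia.
  have ec2 : c = U_right (P w) by lia.
  rewrite [in ti_a _]ec1 [in ti_b _]ec2 in ov1; rewrite [in ti_a _]ec2 [in ti_b _]ec1 in ov2.
  case: (U_left_turn (X_U vX)) => [[x1 [a1 _]]|[x1 [a1 _]]];
  case: (U_right_turn (X_U wX)) => [[y1 [b1 _]]|[y1 [b1 _]]]; rewrite x1 y1 //; lia.
Qed.

Lemma U_col_meet c : (forall v, v \in X -> is_U_col (P v) c) ->
  exists t, ti_or t = Ver /\ ti_line t = c /\ ti_wf t /\
   (exists2 v1, v1 \in X & ti_a t = ti_a (U_col_seg (P v1) c)) /\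
   (exists2 v2, v2 \in X & ti_b t = ti_b (U_col_seg (P v2) c)) /\
   (forall v, v \in X -> ti_contains (U_col_seg (P v) c) t).
Proof.
move=> hc.
have segs : forall v, v \in X -> ti_or (U_col_seg (P v) c) = Ver /\
    ti_line (U_col_seg (P v) c) = c /\ ti_a (U_col_seg (P v) c) < ti_b (U_col_seg (P v) c).
  by move=> v vX; have [_ -> -> ? _] := U_col_seg_props (X_U vX) (hc v vX).
have segs_le : forall v w, v \in X -> w \in X ->
    ti_a (U_col_seg (P v) c) <= ti_b (U_col_seg (P w) c).
  move=> v w vX wX.
  have [_ _ _ _ /andP[? _]] := U_col_seg_props (X_U vX) (hc v vX).
  have [_ _ _ _ /andP[_ ?]] := U_col_seg_props (X_U wX) (hc w wX); lia.
suff /(tinterval_meet X_neq0 segs segs_le) [t [h1 [h2 [h3 [h4 [h5 [_ [h6 _]]]]]]]] :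
    forall v w, v \in X -> w \in X -> ti_a (U_col_seg (P v) c) = ti_b (U_col_seg (P w) c) ->
      ti_x (U_col_seg (P v) c) = ti_y (U_col_seg (P w) c) /\ ti_x (U_col_seg (P v) c) <> TE.
  by exists t.
move=> v w vX wX /= e.
have [_ _ _ n1 /andP[p1 q1]] := U_col_seg_props (X_U vX) (hc v vX).
have [_ _ _ n2 /andP[p2 q2]] := U_col_seg_props (X_U wX) (hc w wX).
have ne : v <> w by move=> ew; subst w; lia.
have [_ [_ l1]] := U_row_seg_props (X_U vX); have [_ [_ l2]] := U_row_seg_props (X_U wX).
have [/(_ ltac:(lia)) tv _] := U_col_seg_types (X_U vX) (hc v vX).
have [_ /(_ ltac:(lia)) tw] := U_col_seg_types (X_U wX) (hc w wX).
(* touching column segments leave row a on the same side, since otherwise the two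
   U-vertices would share no grid edge *)
case: tv => [[cv ->]|[cv ->]]; case: tw => [[cw ->]|[cw ->]] //; exfalso.
all: case: (share_U_U (X_U vX) (X_U wX) (X_share vX wX ne)) => [ov|[c' hc' ov]];
  [move: ov | move: hc' ov]; rewrite /overlaps_U_row /is_U_col /U_left /U_right in l1 l2 cv cw *.
all: try lia.
all: move=> hc' [ov _]; have ec : c' = c by lia.
all: by move: ov; rewrite ec; lia.
Qed.

Lemma U_col_meet_opt c : exists Sc : seq tinterval, (size Sc <= 1)%N /\
  (forall t, List.In t Sc -> ti_or t = Ver /\ ti_wf t /\
     forall v, v \in X -> v_contains (P v) t) /\
  ((forall v, v \in X -> is_U_col (P v) c) ->
     exists t, List.In t Sc /\ ti_or t = Ver /\ ti_line t = c /\
       forall T, ti_or T = Ver -> ti_line T = c -> ti_a T < ti_b T ->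
         (forall v, v \in X -> overlaps_U_col T (P v) c) -> ti_intersects T t).
Proof.
case: (classic (forall v, v \in X -> is_U_col (P v) c)) => hc; last by exists [::].
have [t [h1 [h2 [h3 [[v1 v1X e1] [[v2 v2X e2] h6]]]]]] := U_col_meet hc.
exists [:: t]; split => //; split.
- move=> t' [<-|//]; split => //; split => // v vX.
  have [tp _ _ _ _] := U_col_seg_props (X_U vX) (hc v vX).
  rewrite /v_contains h1 h2; split; first exact: tproj_intersects_line tp.
  by exists (U_col_seg (P v) c); split => //; apply: h6.
- move=> _; exists t; split; first by left.
  split => //; split => // T o1 l1 nd hov; apply: overlap_intersects => //.
  + by split; [rewrite h1 | rewrite h2].
  + by rewrite e2; case: (hov v2 v2X).
  + by rewrite e1; case: (hov v1 v1X).
Qed.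

Lemma U_clique_typed_intervals : exists S : seq tinterval,
  (size S <= 3)%N /\
  (forall t, List.In t S -> ti_wf t) /\
  count (fun t => is_hor (ti_or t)) S = 1%N /\
  (forall t, List.In t S -> ti_or t = Hor -> ti_line t = a) /\
  (count (fun t => is_ver (ti_or t)) S <= 2)%N /\
  (forall v t, v \in X -> List.In t S -> v_contains (P v) t) /\
  (forall u, Z_shape (P u) -> (forall v, v \in X -> share (P u) (P v)) ->
     exists t, List.In t S /\ v_intersects (P u) t).
Proof.
have /set0Pn [v0 v0X] := X_neq0.
have [tH [tH_or [tH_line [tH_wf [tH_left [tH_right [tH_bounds [tH_cont [tH_x tH_y]]]]]]]]] :=
  U_row_meet.
have [Sl [Sl_size [Sl_props Sl_col]]] := U_col_meet_opt (U_left (P v0)).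
have [Sr [Sr_size [Sr_props Sr_col]]] := U_col_meet_opt (U_right (P v0)).
have S_ver t : List.In t (Sl ++ Sr) ->
    ti_or t = Ver /\ ti_wf t /\ forall v, v \in X -> v_contains (P v) t.
  by rewrite List.in_app_iff => -[/Sl_props|/Sr_props].
exists (tH :: Sl ++ Sr); split; first by rewrite /= size_cat; lia.
split; first by move=> t /= [<-|/S_ver [_ []]].
split; first by rewrite /= tH_or count_hor_ver // => t /S_ver [].
split; first by move=> t /= [<-|/S_ver [->]].
split.
  by rewrite /= tH_or add0n; apply: leq_trans (count_size _ _) _; rewrite size_cat; lia.
split.
  move=> v t vX /= [<-|/S_ver [_ [_ /(_ v vX)]] //].
  have tp : tproj (P v) Hor a (U_row_seg (P v)) by apply/(tproj_U_row _ _ (X_U vX)).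
  rewrite /v_contains tH_or tH_line; split; first exact: tproj_intersects_line tp.
  by exists (U_row_seg (P v)); split => //; apply: tH_cont.
move=> u uZ u_share; case: (classic (exists Tu, tproj (P u) Hor a Tu)) => [[Tu hTu]|noH].
  exists tH; split; first by left.
  exact: (Z_row_intersects uZ u_share tH_or tH_line tH_wf tH_left tH_right
    tH_bounds tH_x tH_y hTu).
have {}noH T : ~ tproj (P u) Hor a T by move=> hT; apply: noH; exists T.
have [[e|e] _] := Z_col_of_no_row uZ u_share noH v0X.
- have [t tS ut] := Z_col_intersects uZ u_share Sl_col e noH.
  by exists t; split => //; right; apply/List.in_app_iff; left.
- have [t tS ut] := Z_col_intersects uZ u_share Sr_col e noH.
  by exists t; split => //; right; apply/List.in_app_iff; right.
Qed.

End Meets.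

End UClique.

Theorem lemma11 (V : finType) (E : rel V) (P : V -> path2)
  (hP : forall v, two_bend_path (P v))
  (hE : forall u v, E u v <-> (u <> v /\ share (P u) (P v)))
  (a : int) (X : {set V})
  (hX0 : X != set0)
  (hXcl : forall u v, u \in X -> v \in X -> u <> v -> E u v)
  (hXU : forall u, u \in X -> U_vertex (P u) /\ index_is_single (P u) a) :
  exists S : seq tinterval,
    (size S <= 3)%N /\
    (forall t, List.In t S -> ti_wf t) /\
    count (fun t => is_hor (ti_or t)) S = 1%N /\
    (forall t, List.In t S -> ti_or t = Hor -> ti_line t = a) /\
    (count (fun t => is_ver (ti_or t)) S <= 2)%N /\
    (forall v t, v \in X -> List.In t S -> v_contains (P v) t) /\
    (forall u, Z_vertex (P u) ->
       ((forall v, v \in X -> E u v) <->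
        (exists t, List.In t S /\ v_intersects (P u) t))).
Proof.
have X_U v : v \in X -> U_shape (P v) a by move=> vX; exact: index_single_U_shape (hXU v vX).2.
have X_share v w : v \in X -> w \in X -> v <> w -> share (P v) (P w).
  by move=> vX wX ne; case/hE: (hXcl v w vX wX ne).
have [S [S_size [S_wf [S_hor [S_line [S_ver [S_cont S_Z]]]]]]] :=
  U_clique_typed_intervals X_U X_share hX0.
exists S; do 6 (split; first by []).
move=> u /(Z_vertex_shape (hP u)) uZ; split=> [adj|[t [tS ut]] v vX].
  by apply: S_Z uZ _ => v vX; case/hE: (adj v vX).
apply/hE; split=> [uv|].
  by move: vX; rewrite -uv => /hXU [_ /(Z_shape_not_index_single uZ)].
exact/share_sym/(contains_intersects_share (hP v) (hP u) (S_cont v t vX tS) ut).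
Qed.
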